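(* Let $a,d$ be real numbers and let $T_n(t,a,d)$ be the general Eulerian polynomials defined below. Then, as an identity of formal power series in $u$ with coefficients in the field $\mathbb{R}(t)$ of rational functions in $t$, $$\sum_{n\ge 0}T_n(t,a,d)\frac{u^n}{n!}=\frac{(t-1)\exp(au(t-1))}{t-\exp(du(t-1))}.$$
   Context: For real numbers $a,d$, the general Eulerian numbers $A_{n,k}(a,d)$ (integers $n\ge 0$, $k$) are defined by $A_{0,-1}(a,d)=1$, $A_{n,k}(a,d)=0$ whenever $k\ge n$ or $k\le -2$, and for $n\ge 1$, $-1\le k\le n-1$: $$A_{n,k}(a,d)=(-a+(k+2)d)A_{n-1,k}(a,d)+(a+(n-k-1)d)A_{n-1,k-1}(a,d).$$ The general Eulerian polynomials are $T_n(t,a,d)=\sum_{k=-1}^{n-1}A_{n,k}(a,d)t^{k+1}$ (so $T_0(t,a,d)=1$). Note $t-\exp(du(t-1))$ has constant term $t-1\neq 0$ in $\mathbb{R}(t)[[u]]$, hence is invertible. *)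

From HB Require Import structures.
From mathcomp Require Import all_boot all_order all_algebra fraction.
Set Implicit Arguments. Unset Strict Implicit. Unset Printing Implicit Defensive.
Import Order.TTheory GRing.Theory Num.Theory.
Local Open Scope ring_scope.

Section Eulerian.
Variable R : realFieldType.

Fixpoint eulerA (a d : R) (n : nat) (k : int) : R :=
  match n with
  | 0%N => if k == (-1)%R then 1 else 0
  | m.+1 =>
      if ((-1)%R <= k) && (k < n%:Z)
      then (- a + (k + 2)%:~R * d) * eulerA a d m k
           + (a + (n%:Z - k - 1)%:~R * d) * eulerA a d m (k - 1)
      else 0
  end.

(* T_n(t,a,d) = sum_{k=-1}^{n-1} A_{n,k} t^{k+1}  (index j = k+1). *)
Definition eulerT (a d : R) (n : nat) : {poly R} :=
  \sum_(j < n.+1) eulerA a d n (j%:Z - 1) *: 'X^j.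

Definition Rt := {fraction {poly R}}.
Local Notation "x %:F" := (@FracField.tofrac {poly R} x).
Definition tvar : Rt := ('X)%:F.

Definition fps := nat -> Rt.

Definition fps_mul (f g : fps) : fps :=
  fun n => \sum_(i < n.+1) f i * g (n - i)%N.
Definition fps_sub (f g : fps) : fps := fun n => f n - g n.
Definition fps_const (c : Rt) : fps := fun n => if n == 0%N then c else 0.
Definition fps_exp (c : Rt) : fps := fun n => c ^+ n / (n`!)%:R.

(* Multiplicative inverse of a series (meaningful when f 0 <> 0):
   b_0 = 1/f_0, b_n = -(1/f_0) sum_{k=1}^n f_k b_{n-k}. *)
Fixpoint fps_inv_seq (f : fps) (n : nat) : seq Rt :=
  match n with
  | 0%N => [:: (f 0%N)^-1]
  | m.+1 => let s := fps_inv_seq f m in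
      rcons s (- (f 0%N)^-1 * \sum_(k < m.+1) f k.+1 * nth 0 s (m - k)%N)
  end.
Definition fps_inv (f : fps) : fps := fun n => nth 0 (fps_inv_seq f n) n.
Definition fps_div (f g : fps) : fps := fps_mul f (fps_inv g).

Definition eulerT_egf (a d : R) : fps :=
  fun n => (eulerT a d n)%:F / (n`!)%:R.

Definition eulerT_rhs (a d : R) : fps :=
  fps_div (fps_mul (fps_const (tvar - 1)) (fps_exp ((a%:P)%:F * (tvar - 1))))
          (fps_sub (fps_const tvar) (fps_exp ((d%:P)%:F * (tvar - 1)))).

End Eulerian.

From HB Require Import structures.
From mathcomp Require Import all_boot all_order all_algebra fraction.
From mathcomp Require Import ring zify.
From Stdlib Require Import FunctionalExtensionality.

(* Put y = d(t-1). The recurrence of the Eulerian numbers says T_{n+1} = L_n T_n for the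
   first-order differential operator L_n = (d - a + (a + n d) t) + d t (1 - t) d/dt, and
   L_{i+k} (y^k p) = y^k L_i p. Hence the binomial convolution P_n = sum_i C(n,i) y^(n-i) T_i
   satisfies P_{n+1} = y P_n + L_n P_n, and induction gives t T_n - P_n = a^n (t-1)^(n+1).
   Read off coefficients of u^n/n!, this is the identity
   (sum_n T_n u^n/n!) (t - exp(du(t-1))) = (t-1) exp(au(t-1)), and the denominator is
   invertible because its constant term t - 1 is nonzero. *)

Set Implicit Arguments. Unset Strict Implicit. Unset Printing Implicit Defensive.
Import Order.TTheory GRing.Theory Num.Theory.
Local Open Scope ring_scope.

Section EulerianPolynomials.
Variables (R : realFieldType) (a d : R).
Local Notation A := (eulerA a d).
Local Notation T := (eulerT a d).

Lemma eulerA_eq0 n (k : int) : (k < -1) || (n%:Z <= k) -> A n k = 0.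
Proof.
case: n => [|n] /=; first by case: eqP => // ->.
by case: ifP => // /andP[] *; lia.
Qed.

(* Valid for every k: outside the range of the defining recurrence both A_{n,k} and
   A_{n,k-1} vanish. *)
Lemma eulerAS n (k : int) :
  A n.+1 k = (- a + (k + 2)%:~R * d) * A n k + (a + (n%:Z - k)%:~R * d) * A n (k - 1).
Proof.
rewrite /= -addn1 PoszD [_ + 1 - k]addrAC addrK.
case: ifP => // /negbT; rewrite negb_and -ltNge -leNgt => out.
rewrite !eulerA_eq0 ?mulr0 ?addr0 //; apply/orP; case/orP: out; lia.
Qed.

Lemma coef_eulerT n j : (T n)`_j = A n (j%:Z - 1).
Proof.
rewrite /eulerT -(poly_def n.+1 (fun j : nat => A n (j%:Z - 1))) coef_poly.
by case: ifP => // /negbT; rewrite -leqNgt => lt_n_j; rewrite eulerA_eq0 //; lia.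
Qed.

Lemma eulerT0 : T 0 = 1.
Proof. by rewrite /eulerT big_ord1 expr0 scale1r. Qed.

Definition euler_op (m : nat) (p : {poly R}) : {poly R} :=
  (d%:P - a%:P + (a%:P + m%:R * d%:P) * 'X) * p + d%:P * 'X * (1 - 'X) * p^`().

Lemma euler_opE m p : euler_op m p = (d - a) *: p + (a + m%:R * d) *: ('X * p)
   + d *: ('X * p^`()) - d *: ('X * ('X * p^`())).
Proof. by rewrite /euler_op -!mul_polyC polyCB polyCD polyCM polyC_natr; ring. Qed.

Lemma coef_euler_op0 m p : (euler_op m p)`_0 = (d - a) * p`_0.
Proof. by rewrite euler_opE !(coefD, coefN, coefZ, coefXM) /=; ring. Qed.

Lemma coef_euler_opS m p j : (euler_op m p)`_j.+1 =
  (d - a + j.+1%:R * d) * p`_j.+1 + (a + m%:R * d - j%:R * d) * p`_j.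
Proof.
rewrite euler_opE !(coefD, coefN, coefZ, coefXM) /= !coef_deriv.
by case: j => [|j] /=; ring.
Qed.

Lemma eulerTS n : T n.+1 = euler_op n (T n).
Proof.
apply/polyP => -[|j]; rewrite coef_eulerT eulerAS.
  rewrite coef_euler_op0 coef_eulerT (eulerA_eq0 (k := -2)) //; ring.
rewrite coef_euler_opS !coef_eulerT.
have -> : j.+1%:Z - 1 - 1 = j%:Z - 1 by lia.
have -> : j.+1%:Z - 1 = j by lia.
by rewrite intrD intrB; ring.
Qed.

Lemma euler_opD m : {morph euler_op m : p q / p + q}.
Proof. by move=> p q; rewrite /euler_op derivD; ring. Qed.

Lemma euler_op_sum m (I : finType) (F : I -> {poly R}) :
  euler_op m (\sum_i F i) = \sum_i euler_op m (F i).
Proof. by apply: (big_morph _ (euler_opD m)); rewrite /euler_op deriv0; ring. Qed.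

Lemma euler_opMn m p k : euler_op m (p *+ k) = euler_op m p *+ k.
Proof. by rewrite /euler_op derivMn !mulrnAr mulrnDl. Qed.

Local Notation y := (d%:P * ('X - 1)).

Lemma euler_op_shift i k p : euler_op (i + k) (y ^+ k * p) = y ^+ k * euler_op i p.
Proof.
case: k => [|k]; first by rewrite addn0 expr0 !mul1r.
rewrite /euler_op derivM deriv_exp derivM derivC derivB derivX derivC.
by rewrite -[_ *+ k.+1]mulr_natr natrD exprS; ring.
Qed.

(* n! times the u^n-coefficient of exp(du(t-1)) sum_n T_n u^n/n!. *)
Definition eulerT_binom n := \sum_(i < n.+1) (y ^+ (n - i) * T i) *+ 'C(n, i).

Lemma eulerT_binomS n : eulerT_binom n.+1 = y * eulerT_binom n + euler_op n (eulerT_binom n).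
Proof.
rewrite /eulerT_binom big_ord_recl subn0 bin0 mulr1n.
under eq_bigr => i _ do rewrite lift0 subSS binS mulrnDr.
rewrite big_split addrA; congr (_ + _).
  rewrite [in LHS](big_ord_recr n) [in RHS]mulr_sumr [in RHS](big_ord_recl n) /=.
  rewrite subn0 bin0 mulr1n (bin_small (ltnSn n)) mulr0n addr0 mulrA -exprS; congr (_ + _).
  apply: eq_bigr => i _; rewrite /bump leq0n add1n mulrnAr mulrA -exprS.
  by congr (_ ^+ _ * _ *+ _); have := ltn_ord i; lia.
rewrite euler_op_sum; apply: eq_bigr => i _; rewrite euler_opMn; congr (_ *+ _).
by rewrite -[X in euler_op X _](subnKC (ltnSE (ltn_ord i))) euler_op_shift eulerTS.
Qed.

Lemma eulerT_binomE n : eulerT_binom n = 'X * T n - a%:P ^+ n * ('X - 1) ^+ n.+1.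
Proof.
elim: n => [|n IH].
  by rewrite /eulerT_binom big_ord1 eulerT0 /= mulr1n; ring.
rewrite eulerT_binomS eulerTS IH /euler_op.
rewrite !(derivD, derivN, derivM, derivX, deriv_exp, derivC) /=.
by rewrite -[_ *+ n.+1]mulr_natr !exprS; ring.
Qed.
End EulerianPolynomials.

Lemma coefM_eq_low (K : nzRingType) n (p p' q : {poly K}) :
  (forall i, (i <= n)%N -> p`_i = p'`_i) ->
  forall j, (j <= n)%N -> (p * q)`_j = (p' * q)`_j.
Proof.
move=> eq_pp' j le_jn; rewrite !coefM; apply: eq_bigr => i _.
by rewrite eq_pp' //; have := ltn_ord i; lia.
Qed.

Section FormalPowerSeries.
Variable R : realFieldType.
Implicit Types (f g h : fps R) (c : Rt R).

Lemma size_fps_inv_seq f n : size (fps_inv_seq f n) = n.+1.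
Proof. by elim: n => //= n IH; rewrite size_rcons IH. Qed.

Lemma nth_fps_inv_seq f n k : (k <= n)%N -> nth 0 (fps_inv_seq f n) k = fps_inv f k.
Proof.
elim: n => [|n IH]; first by rewrite leqn0 => /eqP ->.
rewrite leq_eqVlt => /orP[/eqP -> //| lt_kn].
by rewrite /= nth_rcons size_fps_inv_seq lt_kn IH.
Qed.

Lemma fps_invS f m :
  fps_inv f m.+1 = - (f 0%N)^-1 * \sum_(k < m.+1) f k.+1 * fps_inv f (m - k)%N.
Proof.
rewrite /fps_inv /= nth_rcons size_fps_inv_seq ltnn eqxx; congr (_ * _).
by apply: eq_bigr => k _; rewrite nth_fps_inv_seq ?leq_subr.
Qed.

Lemma fps_mulV f n : f 0%N != 0 -> fps_mul f (fps_inv f) n = (n == 0%N)%:R.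
Proof.
move=> f0_neq0; case: n => [|m]; first by rewrite /fps_mul big_ord1 mulfV.
rewrite /fps_mul big_ord_recl subn0; under eq_bigr do rewrite lift0 subSS.
by rewrite fps_invS mulrA mulrN mulfV // mulN1r addNr.
Qed.

Definition fps_trunc f n : {poly Rt R} := \poly_(i < n.+1) f i.

Lemma coef_fps_trunc f n j : (j <= n)%N -> (fps_trunc f n)`_j = f j.
Proof. by rewrite coef_poly ltnS => ->. Qed.

Lemma coef_fps_truncM f g n j : (j <= n)%N -> (fps_trunc f n * fps_trunc g n)`_j = fps_mul f g j.
Proof.
move=> le_jn; rewrite coefM; apply: eq_bigr => i _.
by rewrite !coef_fps_trunc //; have := ltn_ord i; lia.
Qed.

(* Associativity of the convolution is borrowed from {poly Rt R} by truncating at degree n. *)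
Lemma fps_eq_div g D N : D 0%N != 0 -> (forall n, fps_mul g D n = N n) ->
  forall n, g n = fps_div N D n.
Proof.
move=> D0_neq0 gD_N n; rewrite /fps_div -(coef_fps_truncM _ _ (leqnn n)).
have DV1 j : (j <= n)%N -> (1 : {poly Rt R})`_j = (fps_trunc D n * fps_trunc (fps_inv D) n)`_j.
  by move=> le_jn; rewrite coef_fps_truncM // fps_mulV // coef1.
have gD j : (j <= n)%N -> (fps_trunc g n * fps_trunc D n)`_j = (fps_trunc N n)`_j.
  by move=> le_jn; rewrite coef_fps_truncM // gD_N coef_fps_trunc.
rewrite -(coef_fps_trunc g (leqnn n)) -[fps_trunc g n]mulr1 mulrC.
by rewrite (coefM_eq_low _ DV1) // mulrC mulrA (coefM_eq_low _ gD).
Qed.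

Lemma fps_mulBr f g h n : fps_mul f (fps_sub g h) n = fps_mul f g n - fps_mul f h n.
Proof. by rewrite /fps_mul -sumrB; apply: eq_bigr => i _; rewrite mulrBr. Qed.

Lemma fps_mul_constr f c n : fps_mul f (fps_const c) n = f n * c.
Proof.
rewrite /fps_mul big_ord_recr subnn /= big1 ?add0r // => i _.
by rewrite /fps_const subn_eq0 leqNgt ltn_ord mulr0.
Qed.

Lemma fps_mul_constl c f n : fps_mul (fps_const c) f n = c * f n.
Proof.
rewrite /fps_mul big_ord_recl subn0 /= big1 ?addr0 // => i _.
by rewrite /fps_const mul0r.
Qed.

Lemma natr_Rt_eq0 m : ((m%:R : Rt R) == 0) = (m == 0%N).
Proof. by rewrite -(rmorph_nat (@tofrac _)) tofrac_eq0 -polyC_natr polyC_eq0 pnatr_eq0. Qed.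

Lemma fps_mul_egf (x y : nat -> Rt R) n :
  fps_mul (fun i => x i / i`!%:R) (fun i => y i / i`!%:R) n =
  (\sum_(i < n.+1) x i * y (n - i)%N *+ 'C(n, i)) / n`!%:R.
Proof.
rewrite /fps_mul mulr_suml; apply: eq_bigr => i _.
have bin_neq0 : ('C(n, i)%:R : Rt R) != 0 by rewrite natr_Rt_eq0 -lt0n bin_gt0 -ltnS.
rewrite -(bin_fact (ltnSE (ltn_ord i))) natrM -[_ *+ 'C(n, i)]mulr_natl.
by rewrite -mulf_div divff // mul1r natrM mulf_div.
Qed.
End FormalPowerSeries.

Section EulerianEGF.
Variables (R : realFieldType) (a d : R).
Local Notation F := (@tofrac {poly R}).

Lemma eulerT_egf_mul_denom n :
  fps_mul (eulerT_egf a d) (fps_sub (fps_const (tvar R)) (fps_exp (F d%:P * (tvar R - 1)))) n =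
  fps_mul (fps_const (tvar R - 1)) (fps_exp (F a%:P * (tvar R - 1))) n.
Proof.
set c := F d%:P * (tvar R - 1).
have Fy : F (d%:P * ('X - 1)) = c by rewrite tofracM tofracB tofrac1.
have binom : \sum_(i < n.+1) F (eulerT a d i) * c ^+ (n - i) *+ 'C(n, i) = F (eulerT_binom a d n).
  rewrite (big_morph _ (@tofracD _) (@tofrac0 _)); apply: eq_bigr => i _.
  by rewrite tofracMn tofracM tofracXn Fy mulrC.
rewrite fps_mulBr fps_mul_constr fps_mul_constl.
rewrite (fps_mul_egf (fun i => F (eulerT a d i)) (fun i => c ^+ i)) binom eulerT_binomE.
rewrite tofracB !tofracM !tofracXn tofracB tofrac1 -/(tvar R) /fps_exp.
rewrite /eulerT_egf mulrAC [_ * tvar R]mulrC -mulrBl opprB addrC subrK mulrA.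
by rewrite exprMn exprS mulrCA.
Qed.

Lemma tvar_neq1 : tvar R != 1.
Proof.
rewrite /tvar -tofrac1 tofrac_eq; apply/eqP => /(congr1 (size : {poly R} -> nat)).
by rewrite size_polyX size_poly1.
Qed.
End EulerianEGF.

Theorem lemma3p3 (R : realFieldType) (a d : R) :
  eulerT_egf a d = eulerT_rhs a d.
Proof.
apply: functional_extensionality => n; apply: fps_eq_div; last exact: eulerT_egf_mul_denom.
by rewrite /fps_sub /fps_const /fps_exp /= expr0 divr1 subr_eq0 tvar_neq1.
Qed.
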